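(* $$f(n,q) \geq q^{2^{n-1}(1+o(1))} \quad \text{as } q\to\infty,\ n\to\infty.$$ That is, there is a function $\epsilon(n,q)$ with $\epsilon(n,q)\to 0$ as $q\to\infty$ and $n\to\infty$ such that $f(n,q) \geq q^{2^{n-1}(1+\epsilon(n,q))}$ for all integers $q\ge 2$ and $n \ge 1$.
   Context: A $q$-ary word is a finite string of characters over an alphabet of $q$ letters; the empty word is $\varepsilon$. $V$ is a subword of $W$ if $W = UVU'$ for some (possibly empty) words $U,U'$. A word $W$ is an instance of a word $V = x_0x_1\cdots x_{m-1}$ (each $x_i$ a letter) if $W = A_0A_1\cdots A_{m-1}$ with each $A_i$ nonempty and $A_i = A_j$ whenever $x_i = x_j$. A word $U$ encounters $V$ if some subword of $U$ is an instance of $V$; otherwise $U$ avoids $V$. The Zimin words are defined by $Z_0 := \varepsilon$ and $Z_{n+1} := Z_n x_n Z_n$ for distinct letters $x_0,x_1,\dots$. For positive integers $n,q$, $f(n,q)$ denotes the smallest integer $M$ such that every $q$-ary word of length $M$ encounters $Z_n$. *)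

From mathcomp Require Import all_boot.
Set Implicit Arguments. Unset Strict Implicit. Unset Printing Implicit Defensive.

Fixpoint zimin (n : nat) : seq nat :=
  if n is n'.+1 then zimin n' ++ n' :: zimin n' else [::].

Definition instance_of (T S : eqType) (W : seq T) (V : seq S) : Prop :=
  exists As : seq (seq T),
    [/\ size As = size V,
        all (fun A => A != [::]) As,
        flatten As = W &
        forall i j, i < size V -> j < size V ->
          onth V i = onth V j -> nth [::] As i = nth [::] As j].

Definition encounters (T S : eqType) (U : seq T) (V : seq S) : Prop :=
  exists W : seq T, infix W U /\ instance_of W V.

Definition all_encounter (n q M : nat) : Prop :=
  forall w : seq 'I_q, size w = M -> encounters w (zimin n).

Definition is_f (n q M : nat) : Prop :=
  all_encounter n q M /\ forall M', all_encounter n q M' -> M <= M'.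

From mathcomp Require Import all_boot zify.
Set Implicit Arguments. Unset Strict Implicit. Unset Printing Implicit Defensive.

(* A word is an instance of Z_(n+1) iff it has the form A b A with A an
   instance of Z_n and b nonempty.  Hence the number I_(n+1)(l) of q-ary
   instances of Z_(n+1) of length l is at most the sum over a of
   I_n(a) q^(l-2a); as I_n(a) = 0 for a < 2^n - 1, a geometric sum gives by
   induction I_n(l) q^(2^n) <= q^(l+2n).  If every word of length M encounters
   Z_n, each of the q^M words has a Z_n-instance in one of its (M+1)^2 windows,
   and a given window of length l is an instance in at most I_n(l) q^(M-l)
   words.  So q^(2^n) <= (M+1)^2 q^(2n), i.e. f(n,q) >= q^(2^(n-1)) / (2 q^n),
   which is q^(2^(n-1) (1 + eps)) for eps = -(n + log_q 2) / 2^(n-1). *)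

Section ZiminInstance.
Variable T : eqType.

Fixpoint zimin_inst (n : nat) (w : seq T) : bool :=
  if n is n'.+1 then
    has (fun a => [&& a.*2 < size w, zimin_inst n' (take a w)
                    & drop (size w - a) w == take a w])
        (iota 0 (size w))
  else w == [::].

Definition zimin_split n (w : seq T) a :=
  [&& a.*2 < size w, zimin_inst n (take a w) & drop (size w - a) w == take a w].

Lemma zimin_instS n w : zimin_inst n.+1 w = has (zimin_split n w) (iota 0 (size w)).
Proof. by []. Qed.

Lemma zimin_inst_size n w : zimin_inst n w -> 2 ^ n <= (size w).+1.
Proof.
elim: n w => [|n IH] w //.
rewrite zimin_instS => /hasP[a _ /and3P[a2_lt /IH + _]]; rewrite size_take expnS.
by case: ifP; lia.
Qed.

Lemma instance_of_doubled (S : eqType) (W : seq T) (V : seq S) x :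
  instance_of W (V ++ x :: V) ->
  exists A b, [/\ W = A ++ b ++ A, b != [::] & instance_of A V].
Proof.
case=> As [sizeAs nonempty <- consistent].
set k := size V; have sizeAs' : size As = k + k.+1 by rewrite sizeAs size_cat.
set As1 := take k As.
have dropAs : drop k.+1 As = As1.
  apply: (@eq_from_nth _ [::]) => [|i].
    by rewrite size_drop size_take sizeAs'; case: ifP; lia.
  rewrite size_drop => i_lt; rewrite nth_drop nth_take; last by lia.
  symmetry; apply: consistent; rewrite ?size_cat; try (rewrite /= -/k; lia).
  by rewrite !onth_cat -/k ifT ?ifF ?addSnnS ?addKn //; lia.
have splitAs : As = As1 ++ nth [::] As k :: As1.
  by rewrite -{2}dropAs /As1 -(drop_nth [::]) ?cat_take_drop //; lia.
exists (flatten As1), (nth [::] As k); split.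
- by rewrite {1}splitAs flatten_cat.
- by move/allP: nonempty; apply; apply: mem_nth; rewrite sizeAs'; lia.
exists As1; split=> //.
- by rewrite size_takel // sizeAs' leq_addr.
- by apply/allP=> A /mem_take; move/allP: nonempty; apply.
move=> i j i_lt j_lt eq_ij; rewrite !nth_take //.
by apply: consistent; rewrite ?size_cat ?onth_cat ?i_lt ?j_lt //; lia.
Qed.

Lemma instance_zimin_inst n (W : seq T) : instance_of W (zimin n) -> zimin_inst n W.
Proof.
elim: n W => [|n IH] W.
  by case=> [[|A As]] [] // _ _ <-.
case/instance_of_doubled=> A [b [-> b_nonempty /IH A_inst]].
have b_pos : 0 < size b by rewrite lt0n size_eq0.
rewrite zimin_instS; apply/hasP; exists (size A); first by rewrite mem_iota !size_cat; lia.
rewrite /zimin_split (_ : size (A ++ b ++ A) - size A = size (A ++ b)); last first.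
  by rewrite !size_cat; lia.
by rewrite take_size_cat // catA drop_size_cat // A_inst eqxx andbT !size_cat; lia.
Qed.

Definition inst_window n (w : seq T) i l :=
  (i + l <= size w) && zimin_inst n (take l (drop i w)).

Lemma encounters_inst_window n (w : seq T) : encounters w (zimin n) ->
  has (fun i => has (inst_window n w i) (index_iota 0 (size w).+1))
      (index_iota 0 (size w).+1).
Proof.
case=> W [/infixP[s [s' ->]] /instance_zimin_inst W_inst].
apply/hasP; exists (size s); first by rewrite mem_index_iota !size_cat; lia.
apply/hasP; exists (size W); first by rewrite mem_index_iota !size_cat; lia.
by rewrite /inst_window drop_size_cat // take_size_cat // W_inst !size_cat; lia.
Qed.

End ZiminInstance.

Lemma count_uniq_leq_size (T : eqType) (P : pred T) (s t : seq T) :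
  uniq s -> {in s, forall x, P x -> x \in t} -> count P s <= size t.
Proof.
move=> s_uniq sub; rewrite -size_filter; apply: uniq_leq_size; first exact: filter_uniq.
by move=> x; rewrite mem_filter => /andP[Px sx]; apply: sub.
Qed.

Lemma count_has_leq_sum (I T : Type) (s : seq I) (P : I -> pred T) (t : seq T) :
  count (fun x => has (P^~ x) s) t <= \sum_(i <- s) count (P i) t.
Proof.
elim: t => [|x t IH] /=; first by rewrite big1.
rewrite (eq_bigr (fun i => P i x + count (P i) t)) // big_split /= leq_add //.
elim: s {IH} => [|i s IHs]; rewrite ?big_nil ?big_cons //=.
by case: (P i x); rewrite //= add0n.
Qed.

Lemma sum_expn_tail q m l :
  1 < q -> (\sum_(m <= a < l) q ^ (l - a)) * q ^ m < q ^ l.+1.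
Proof.
move=> q_gt1.
have tail k : \sum_(m <= a < k) q ^ (k - a) + q <= q ^ (k - m).+1.
  elim: k => [|k IH]; first by rewrite big_geq.
  case: (ltnP k m) => [k_lt|m_le]; first by rewrite big_geq // (_ : k.+1 - m = 0) //; lia.
  rewrite big_nat_recr //= subSnn expn1 (subSn m_le) [q ^ (k - m).+2]expnS.
  have -> : \sum_(m <= a < k) q ^ (k.+1 - a) = q * \sum_(m <= a < k) q ^ (k - a).
    by rewrite big_distrr; apply: eq_big_nat => a /andP[_ a_lt]; rewrite subSn ?expnS // ltnW.
  nia.
case: (ltnP l m) => [l_lt|m_le]; first by rewrite big_geq ?mul0n ?expn_gt0 //; lia.
have := tail l; rewrite -(subnK m_le) addnK -addSn expnD; nia.
Qed.

Section Words.
Variable q : nat.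
Local Notation word := (seq 'I_q).

Fixpoint words k : seq word :=
  if k is k'.+1 then [seq x :: w | x <- enum 'I_q, w <- words k'] else [:: [::]].

Lemma size_words k : size (words k) = q ^ k.
Proof. by elim: k => //= k IH; rewrite size_allpairs size_enum_ord IH expnS. Qed.

Lemma uniq_words k : uniq (words k).
Proof.
elim: k => //= k IH; apply: allpairs_uniq => //; first exact: enum_uniq.
by move=> [x w] [y v] _ _ /= [-> ->].
Qed.

Lemma mem_words k w : (w \in words k) = (size w == k).
Proof.
elim: k w => [|k IH] [|x w] //=.
  by apply/allpairsP=> -[[y v]] /= [_ _].
apply/allpairsP/idP => [[[y v]] /= [_]|].
  by rewrite IH => /eqP <- [_ ->].
by move=> w_size; exists (x, w); rewrite /= IH mem_enum.
Qed.

Definition inst_count n l := count (@zimin_inst _ n) (words l).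

Lemma inst_count_eq0 n l : l.+1 < 2 ^ n -> inst_count n l = 0.
Proof.
move=> l_lt; rewrite /inst_count (eq_in_count (a2 := pred0)) ?count_pred0 // => w.
by rewrite mem_words => /eqP w_size /=; apply/negbTE/negP => /zimin_inst_size; lia.
Qed.

Lemma count_zimin_split_leq n l a : a.*2 < l ->
  count (zimin_split n ^~ a) (words l) <= inst_count n a * q ^ (l - a.*2).
Proof.
move=> a2_lt; set splits := [seq A ++ B ++ A | A <- filter (@zimin_inst _ n) (words a),
                                               B <- words (l - a.*2)].
have -> : inst_count n a * q ^ (l - a.*2) = size splits.
  by rewrite size_allpairs size_filter size_words.
apply: count_uniq_leq_size; first exact: uniq_words.
move=> w; rewrite mem_words => /eqP w_size /and3P[_ A_inst /eqP suffix].
have -> : w = take a w ++ take (l - a.*2) (drop a w) ++ take a w.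
  rewrite -{1}(cat_take_drop a w) -{1}(cat_take_drop (l - a.*2) (drop a w)) drop_drop.
  by rewrite -suffix w_size; congr (_ ++ _ ++ drop _ _); lia.
apply: (allpairs_f (fun A B => A ++ B ++ A)).
  by rewrite mem_filter A_inst mem_words size_takel ?w_size //; lia.
by rewrite mem_words size_takel // size_drop w_size; lia.
Qed.

Lemma inst_countS_leq n l :
  inst_count n.+1 l <= \sum_(0 <= a < l | a.*2 < l) inst_count n a * q ^ (l - a.*2).
Proof.
rewrite /inst_count (eq_in_count (a2 := fun w => has (zimin_split n w) (index_iota 0 l))).
  2: by move=> w; rewrite mem_words /index_iota subn0 => /eqP <-.
apply: leq_trans (count_has_leq_sum _ _ _) _.
rewrite [leqRHS]big_mkcond; apply: leq_sum => a _ /=.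
case: ifP => [|a2_ge]; first exact: count_zimin_split_leq.
rewrite (eq_in_count (a2 := pred0)) ?count_pred0 // => w.
by rewrite mem_words /zimin_split => /eqP ->; rewrite a2_ge.
Qed.

Hypothesis q_gt1 : 1 < q.

Lemma inst_count_bound n l : inst_count n.+1 l * q ^ (2 ^ n.+1) <= q ^ (l + n.+1.*2).
Proof.
elim: n l => [|n IH] l.
  by rewrite expnD leq_mul2r -(size_words l) count_size orbT.
set m := (2 ^ n.+1).-1.
have m_succ : 2 ^ n.+1 = m.+1 by rewrite prednK // expn_gt0.
apply: (@leq_trans ((\sum_(m <= a < l) q ^ (l - a)) * q ^ m * q ^ (n.+1.*2.+1))).
  rewrite expnS mul2n -addnn expnD.
  apply: leq_trans (leq_mul (inst_countS_leq n.+1 l) (leqnn _)) _.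
  rewrite -mulnA !big_distrl [leqRHS](big_nat_widenl _ 0) //.
  rewrite [leqLHS]big_mkcond [leqRHS]big_mkcond /=.
  apply: leq_sum => a _.
  case: ifP => // a2_lt.
  case: ifP => [m_le|m_gt]; last by rewrite inst_count_eq0 ?mul0n //; move/negbT: m_gt; lia.
  have := IH a; rewrite m_succ [q ^ m.+1]expnS.
  have -> : q ^ (l - a) * (q ^ m * q ^ (n.+1.*2.+1))
            = q ^ (a + n.+1.*2) * q ^ (l - a.*2) * (q ^ m * q).
    by rewrite -expnSr -!expnD; congr (_ ^ _); lia.
  nia.
rewrite (_ : l + n.+2.*2 = l.+1 + n.+1.*2.+1) ?expnD; last by lia.
by rewrite leq_mul2r; apply/orP; right; apply/ltnW/sum_expn_tail.
Qed.

Lemma count_inst_window_bound n M i l :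
  count (fun w => inst_window n.+1 w i l) (words M) * q ^ (2 ^ n.+1)
  <= q ^ (M + n.+1.*2).
Proof.
have [il_le|il_gt] := leqP (i + l) M; last first.
  rewrite (eq_in_count (a2 := pred0)) ?count_pred0 // => w.
  by rewrite mem_words /inst_window => /eqP ->; rewrite leqNgt il_gt.
set windows := [seq u ++ v | u <- words i,
                  v <- [seq A ++ B | A <- filter (@zimin_inst _ n.+1) (words l),
                                     B <- words (M - i - l)]].
have : count (fun w => inst_window n.+1 w i l) (words M) <= size windows.
  apply: count_uniq_leq_size; first exact: uniq_words.
  move=> w; rewrite mem_words => /eqP w_size /andP[_ A_inst].
  rewrite -(cat_take_drop i w) -(cat_take_drop l (drop i w)).
  apply: allpairs_f; first by rewrite mem_words size_takel ?w_size //; lia.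
  apply: allpairs_f.
    by rewrite mem_filter A_inst mem_words size_takel ?size_drop ?w_size //; lia.
  by rewrite mem_words !size_drop w_size; apply/eqP; lia.
rewrite !size_allpairs size_filter !size_words -/(inst_count n.+1 l) => count_le.
have -> : q ^ (M + n.+1.*2) = q ^ i * q ^ (l + n.+1.*2) * q ^ (M - i - l).
  by rewrite -!expnD; congr (_ ^ _); lia.
apply: leq_trans (leq_mul count_le (leqnn _)) _.
rewrite -!mulnA leq_pmul2l ?expn_gt0; last by lia.
have := inst_count_bound n l; nia.
Qed.

Lemma all_encounter_bound_sqr n M :
  all_encounter n.+1 q M -> q ^ (2 ^ n.+1) <= M.+1 ^ 2 * q ^ n.+1.*2.
Proof.
move=> enc; set Q := q ^ (2 ^ n.+1).
have start_bound i : count (fun w => has (inst_window n.+1 w i) (index_iota 0 M.+1))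
                       (words M) * Q <= M.+1 * q ^ (M + n.+1.*2).
  apply: leq_trans (leq_mul (count_has_leq_sum _ _ _) (leqnn Q)) _.
  rewrite -[M.+1]subn0 -sum_nat_const_nat big_distrl; apply: leq_sum => l _.
  exact: count_inst_window_bound.
have all_windows : q ^ M = count (fun w =>
    has (fun i => has (inst_window n.+1 w i) (index_iota 0 M.+1)) (index_iota 0 M.+1)) (words M).
  rewrite -(size_words M) -count_predT; apply: eq_in_count => w.
  rewrite mem_words => /eqP w_size /=.
  by have := encounters_inst_window (enc w w_size); rewrite w_size.
have : q ^ M * Q <= q ^ M * (M.+1 ^ 2 * q ^ n.+1.*2).
  rewrite {1}all_windows.
  apply: leq_trans (leq_mul (count_has_leq_sum _ _ _) (leqnn Q)) _.
  have -> : q ^ M * (M.+1 ^ 2 * q ^ n.+1.*2) = (M.+1 - 0) * (M.+1 * q ^ (M + n.+1.*2)).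
    by rewrite subn0 expnD; nia.
  rewrite -sum_nat_const_nat big_distrl; apply: leq_sum => i _.
  exact: start_bound.
by rewrite leq_pmul2l // expn_gt0; lia.
Qed.
End Words.

Lemma all_encounter_gt0 n q M : all_encounter n.+1 q M -> 0 < M.
Proof.
case: M => // /(_ [::] erefl) /encounters_inst_window /hasP[i _] /hasP[l _] /andP[_].
move=> /zimin_inst_size; rewrite drop_oversize //= expnS.
by have := expn_gt0 2 n; lia.
Qed.

Lemma all_encounter_lower_bound n q M : 1 < q -> all_encounter n.+1 q M ->
  q ^ (2 ^ n) <= 2 * M * q ^ n.+1.
Proof.
move=> q_gt1 enc; have M_gt0 := all_encounter_gt0 enc.
rewrite -(@leq_exp2r _ _ 2) // -expnM -expnSr.
apply: leq_trans (all_encounter_bound_sqr q_gt1 enc) _.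
rewrite !expnMn -expnM muln2 -expnMn; apply: leq_mul => //.
by rewrite leq_exp2r //; lia.
Qed.

Lemma sqr_succ_leq_exp2 n : 3 <= n -> n.+1 * n.+1 <= 4 * 2 ^ (n - 1).
Proof.
elim: n => // n IH; rewrite leq_eqVlt => /orP[/eqP <- //|n_ge3].
have exp_pred : 2 ^ n = 2 * 2 ^ (n - 1) by rewrite -expnS; congr (2 ^ _); lia.
by have := IH n_ge3; rewrite subSS subn0 exp_pred; lia.
Qed.

From Stdlib Require Import Reals Lra.
Open Scope R_scope.

Lemma INR_expn m k : INR (expn m k) = INR m ^ k.
Proof. by elim: k => [|k IH] //; rewrite expnS mult_INR IH. Qed.

Lemma Nat_pow_expn m k : Nat.pow m k = expn m k.
Proof. by elim: k => [|k IH] //; rewrite expnS -IH. Qed.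

Definition zimin_eps (n q : nat) : R :=
  - (INR n + ln 2 / ln (INR q)) / INR (2 ^ (n - 1))%nat.

Lemma ln2_pos : 0 < ln 2.
Proof. by have := ln_lt_2; lra. Qed.

Lemma ln2_le_ln q : (2 <= q)%nat -> ln 2 <= ln (INR q).
Proof.
move=> q_ge2; have : 2 <= INR q by apply: (le_INR 2); apply/leP.
by case/Rle_lt_or_eq_dec=> [/ln_increasing|<-]; lra.
Qed.

Lemma Rpower_zimin_eps n q : (2 <= q)%nat -> (1 <= n)%nat ->
  Rpower (INR q) (INR (2 ^ (n - 1))%nat * (1 + zimin_eps n q))
  = INR q ^ (2 ^ (n - 1)) / (2 * INR q ^ n).
Proof.
move=> q_ge2 n_ge1; have ln_ge := ln2_le_ln q_ge2; have ln2_gt0 := ln2_pos.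
have q_pos : 0 < INR q by apply: lt_0_INR; apply/ltP; lia.
have P_pos : 0 < INR (2 ^ (n - 1))%nat by apply: lt_0_INR; apply/ltP; rewrite Nat_pow_expn expn_gt0.
rewrite -(Rpower_pow (2 ^ (n - 1)) _ q_pos) -(Rpower_pow n _ q_pos) /Rpower.
have -> : INR (2 ^ (n - 1))%nat * (1 + zimin_eps n q) * ln (INR q)
          = INR (2 ^ (n - 1))%nat * ln (INR q) + - (INR n * ln (INR q) + ln 2).
  by rewrite /zimin_eps; field; lra.
rewrite exp_plus exp_Ropp exp_plus exp_ln; last by lra.
by field; have := exp_pos (INR n * ln (INR q)); lra.
Qed.

Lemma zimin_eps_le n q : (3 <= n)%nat -> (2 <= q)%nat -> Rabs (zimin_eps n q) <= 4 / INR n.+1.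
Proof.
move=> n_ge3 q_ge2; have ln_ge := ln2_le_ln q_ge2; have ln2_gt0 := ln2_pos.
have ratio_le1 : 0 <= ln 2 / ln (INR q) <= 1.
  split; first by apply: Rlt_le; apply: Rdiv_lt_0_compat; lra.
  by apply: (Rmult_le_reg_r (ln (INR q))); [lra | field_simplify; lra].
have sqr_le : INR n.+1 * INR n.+1 <= 4 * INR (2 ^ (n - 1))%nat.
  rewrite -mult_INR (_ : 4 = INR 4); last by simpl; lra.
  rewrite -mult_INR Nat_pow_expn; apply: le_INR; apply/leP.
  exact: sqr_succ_leq_exp2.
have P_pos : 0 < INR (2 ^ (n - 1))%nat by apply: lt_0_INR; apply/ltP; rewrite Nat_pow_expn expn_gt0.
have n_pos : 0 < INR n.+1 by apply: lt_0_INR; apply/ltP.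
rewrite /zimin_eps Rdiv_opp_l Rabs_Ropp Rabs_pos_eq; last first.
  by apply: Rmult_le_pos; [have := pos_INR n; lra | apply/Rlt_le/Rinv_0_lt_compat].
rewrite S_INR in sqr_le n_pos *; set P := INR (2 ^ (n - 1))%nat in sqr_le P_pos *.
apply: (Rle_trans _ ((INR n + 1) / P)).
  by apply: Rmult_le_compat_r; [apply/Rlt_le/Rinv_0_lt_compat | lra].
apply: (Rmult_le_reg_r (P * (INR n + 1))); first nra.
have -> : (INR n + 1) / P * (P * (INR n + 1)) = (INR n + 1) * (INR n + 1) by field; lra.
by have -> : 4 / (INR n + 1) * (P * (INR n + 1)) = 4 * P by field; lra.
Qed.

Lemma zimin_eps_vanishes e : 0 < e -> exists N, forall n q,
  (N <= n)%nat -> (N <= q)%nat -> Rabs (zimin_eps n q) < e.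
Proof.
move=> e_pos; have [k k_gt] := INR_unbounded (4 / e).
exists (maxn 3 k) => n q n_ge q_ge.
have n_ge3 : (3 <= n)%nat by lia.
have q_ge2 : (2 <= q)%nat by lia.
apply: Rle_lt_trans (zimin_eps_le n_ge3 q_ge2) _.
have n_gt : 4 / e < INR n.+1 by apply: Rlt_le_trans k_gt _; apply: le_INR; apply/leP; lia.
have n_pos : 0 < INR n.+1 by apply: lt_0_INR; apply/ltP.
apply: (Rmult_lt_reg_r (INR n.+1)) => //.
have -> : 4 / INR n.+1 * INR n.+1 = 4 / e * e by field; lra.
by rewrite [e * _]Rmult_comm; apply: Rmult_lt_compat_r.
Qed.

Lemma zimin_eps_bound n q M : (2 <= q)%nat -> (1 <= n)%nat -> is_f n q M ->
  Rpower (INR q) (INR (2 ^ (n - 1))%nat * (1 + zimin_eps n q)) <= INR M.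
Proof.
move=> q_ge2 n_ge1 [enc _]; rewrite Rpower_zimin_eps //.
case: n n_ge1 enc => // n _ /(all_encounter_lower_bound q_ge2) /leP /le_INR.
rewrite !mult_INR !INR_expn subn1 /= Nat_pow_expn => bound.
have q_pos : 0 < INR q by apply: lt_0_INR; apply/ltP; lia.
have qn_pos := pow_lt _ n q_pos.
apply: (Rmult_le_reg_r (2 * (INR q * INR q ^ n))); first nra.
have -> : INR q ^ expn 2 n / (2 * (INR q * INR q ^ n)) * (2 * (INR q * INR q ^ n))
          = INR q ^ expn 2 n by field; nra.
nra.
Qed.

Theorem mainTheorem2 :
  exists eps : nat -> nat -> R,
    (forall e : R, 0 < e -> exists N : nat,
       forall n q : nat, (N <= n)%nat -> (N <= q)%nat -> Rabs (eps n q) < e) /\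
    (forall n q M : nat, (2 <= q)%nat -> (1 <= n)%nat -> is_f n q M ->
       Rpower (INR q) (INR (2 ^ (n - 1))%nat * (1 + eps n q)) <= INR M).
Proof.
exists zimin_eps; split; [exact: zimin_eps_vanishes | exact: zimin_eps_bound].
Qed.
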